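(* Consider an instance of Solitaire Hanabi with a single color ($c=1$), values $1,\dots,n$, hand size $h$, and deck $\sigma=(a_1,\dots,a_N)$ (listing the values of the cards). Call the $i$-th card useless if there exist integers $w_1,\dots,w_{h+1}$ with $a_i<w_1<\dots<w_{h+1}\le n$ such that $a_j\notin\{w_1,\dots,w_{h+1}\}$ for all $j\in\{i+1,\dots,N\}$. Then no winning play sequence plays a useless card.
   Context: Solitaire Hanabi: a card is a pair $(a,k)$ with value $a\in\{1,\dots,n\}$ and color $k\in\{1,\dots,c\}$. The deck is a fully known sequence of $N$ cards drawn one by one in order, starting with an empty hand. When a card is drawn the player may discard it (gone forever), store it in hand, or play it immediately; at no time may more than $h$ cards be stored in hand. A card $(a,k)$ may be played iff either $a=1$ and no card of color $k$ has been played, or the last card of color $k$ played has value $a-1$. After playing a card, the player may also play stored cards obeying the same rule. A winning play sequence is one that plays (one copy of) every card $(a,k)$, $1\le a\le n$, $1\le k\le c$. *)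

From mathcomp Require Import all_boot.
Set Implicit Arguments. Unset Strict Implicit. Unset Printing Implicit Defensive.

(* The deck is [s : seq nat] listing card values; card i (0-based) has value
   [nth 0 s i].  Cards are identified by their deck index. *)

(* Events of a play sequence.  [Discard], [Store], [PlayNew] act on the next
   drawn card; [PlayHand j] plays the stored card with deck index j, which is
   only allowed right after a play. *)
Inductive event := Discard | Store | PlayNew | PlayHand of nat.

Record state := State {
  drawn : nat;
  hand : seq nat;       (* deck indices of stored cards *)
  top : nat;            (* value of last card played, 0 if none *)
  played : seq nat;     (* deck indices of played cards *)
  justplayed : bool
}.

Definition init_state := State 0 [::] 0 [::] false.

(* (single colour) value a playable iff (a = 1 and nothing played) or last
   played value is a-1; with top = 0 for "nothing played" and values >= 1
   this is exactly top.+1 == a. *)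
Definition playable (top a : nat) : bool := top.+1 == a.

Definition step (h : nat) (s : seq nat) (st : state) (e : event) : option state :=
  match e with
  | Discard =>
      if drawn st < size s then
        Some (State (drawn st).+1 (hand st) (top st) (played st) false)
      else None
  | Store =>
      if (drawn st < size s) && (size (hand st) < h) then
        Some (State (drawn st).+1 (drawn st :: hand st) (top st) (played st) false)
      else None
  | PlayNew =>
      if (drawn st < size s) && playable (top st) (nth 0 s (drawn st)) then
        Some (State (drawn st).+1 (hand st) (nth 0 s (drawn st))
                    (drawn st :: played st) true)
      else None
  | PlayHand j =>
      if [&& justplayed st, j \in hand st & playable (top st) (nth 0 s j)] then
        Some (State (drawn st) (rem j (hand st)) (nth 0 s j)
                    (j :: played st) true)
      else None
  end.

Fixpoint run_from (h : nat) (s : seq nat) (st : state) (es : seq event)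
  : option state :=
  match es with
  | [::] => Some st
  | e :: es' => match step h s st e with
                | Some st' => run_from h s st' es'
                | None => None
                end
  end.

Definition run h s es := run_from h s init_state es.

Definition winning (n h : nat) (s : seq nat) (es : seq event) : Prop :=
  exists st, run h s es = Some st /\
    forall a, 1 <= a <= n -> exists2 j, j \in played st & nth 0 s j = a.

Definition plays_card (h : nat) (s : seq nat) (es : seq event) (i : nat) : Prop :=
  exists st, run h s es = Some st /\ i \in played st.

Definition useless (n h : nat) (s : seq nat) (i : nat) : Prop :=
  exists w : seq nat,
    [/\ size w = h.+1, sorted ltn (nth 0 s i :: w), all (fun x => x <= n) w
      & all (fun x => x \notin drop i.+1 s) w].

From mathcomp Require Import all_boot.
From mathcomp Require Import zify.
Set Implicit Arguments. Unset Strict Implicit.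

(* Look at the state right after the useless card i is played: the top value
   is a_i, so each w_k is still to be played.  A card played from then on was
   either in the hand at that moment or is drawn later, hence has deck index
   > i; the latter is excluded for the w_k.  So the h+1 distinct values w_k
   all occur among the at most h cards of that hand. *)

Definition reachable h s (st st' : state) :=
  exists es, run_from h s st es = Some st'.

Lemma reachable_ind h s (P : state -> Prop) st st' :
  (forall st0 e st1, P st0 -> step h s st0 e = Some st1 -> P st1) ->
  P st -> reachable h s st st' -> P st'.
Proof.
move=> Pstep + [es]; elim: es st => [|e es IH] st Pst /=; first by case=> <-.
by case E: (step h s st e) => [st0|] //; apply: IH; apply: Pstep E.
Qed.

Definition wf_state h s st :=
  [/\ forall j, j \in played st -> nth 0 s j <= top st,
      size (hand st) <= h
    & forall j, j \in hand st -> j < drawn st].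

Lemma wf_init h s : wf_state h s init_state.
Proof. by []. Qed.

Lemma step_wf h s st e st' :
  wf_state h s st -> step h s st e = Some st' -> wf_state h s st'.
Proof.
case=> Hplayed Hsize Hhand; case: e => [|||j] /=.
- case: ifP => // _ [<-]; split => //= x /Hhand; lia.
- case: ifP => // /andP[_ hl] [<-]; split => //= x.
  by rewrite inE => /orP[/eqP->|/Hhand]; lia.
- case: ifP => // /andP[_ /eqP pl] [<-]; split => //= x.
    by rewrite inE => /orP[/eqP->//|/Hplayed]; lia.
  by move/Hhand; lia.
- case: ifP => // /and3P[_ jin /eqP pl] [<-]; split => /=.
  + by move=> x; rewrite inE => /orP[/eqP->//|/Hplayed]; lia.
  + by rewrite size_rem //; apply: leq_trans (leq_pred _) Hsize.
  + by move=> x /mem_rem/Hhand.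
Qed.

Lemma step_new_play h s st e st' j :
  wf_state h s st -> step h s st e = Some st' ->
  j \notin played st -> j \in played st' ->
  top st' = nth 0 s j /\ j < drawn st'.
Proof.
case=> _ _ Hhand; case: e => [|||k] /=.
- by case: ifP => // _ [<-] /negPf->.
- by case: ifP => // _ [<-] /negPf->.
- case: ifP => // _ [<-] /= /negPf jnew.
  by rewrite inE jnew orbF => /eqP->.
- case: ifP => // /and3P[_ kin _] [<-] /= /negPf jnew.
  by rewrite inE jnew orbF => /eqP->; split; last exact: Hhand.
Qed.

Lemma reachable_first_play h s st st' i :
  wf_state h s st -> reachable h s st st' ->
  i \notin played st -> i \in played st' ->
  exists2 st1, [/\ wf_state h s st1, top st1 = nth 0 s i & i < drawn st1]
             & reachable h s st1 st'.
Proof.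
move=> + [es]; elim: es st => [|e es IH] st Hwf /=; first by case=> -> /negPf->.
case E: (step h s st e) => [st0|] // Hrun Hnew Hin.
have Hwf0 := step_wf Hwf E.
case: (boolP (i \in played st0)) => [Hi0|Hnew0]; last exact: IH Hwf0 Hrun Hnew0 Hin.
have [Htop Hdrawn] := step_new_play Hwf E Hnew Hi0.
by exists st0; [split | exists es].
Qed.

Definition available st1 j := (j \in hand st1) || (drawn st1 <= j).

Definition follows s st1 st :=
  [/\ top st1 <= top st, drawn st1 <= drawn st,
      (forall j, j \in hand st -> available st1 j)
    & forall j, j \in played st ->
        j \in played st1 \/ top st1 < nth 0 s j /\ available st1 j].

Lemma follows_refl s st : follows s st st.
Proof. by split=> // [j jh|j jp]; [rewrite /available jh | left]. Qed.

Lemma step_follows h s st1 st e st' :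
  follows s st1 st -> step h s st e = Some st' -> follows s st1 st'.
Proof.
rewrite /available; case=> Htop Hdrawn Hhand Hplayed; case: e => [|||j] /=.
- case: ifP => // _ [<-]; split => //=; lia.
- case: ifP => // _ [<-]; split => //=; first lia.
  by move=> x; rewrite inE => /orP[/eqP->|/Hhand//]; apply/orP; right.
- case: ifP => // /andP[_ /eqP pl] [<-]; split => //=; try lia.
  move=> x; rewrite inE => /orP[/eqP->|/Hplayed//]; right.
  by split; [lia | apply/orP; right].
- case: ifP => // /and3P[_ jin /eqP pl] [<-]; split => //=; try lia.
    by move=> x /mem_rem/Hhand.
  move=> x; rewrite inE => /orP[/eqP->|/Hplayed//]; right.
  by split; [lia | exact: Hhand].
Qed.

Lemma reachable_follows h s st1 st :
  reachable h s st1 st -> follows s st1 st.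
Proof. exact: reachable_ind (@step_follows h s st1) (follows_refl s st1). Qed.

Lemma played_above_top_available h s st1 st j :
  wf_state h s st1 -> reachable h s st1 st ->
  j \in played st -> top st1 < nth 0 s j -> available st1 j.
Proof.
move=> [Hplayed _ _] /reachable_follows[_ _ _ Hlater] /Hlater[/Hplayed|[]//].
lia.
Qed.

Lemma mem_nth_drop (s : seq nat) i j :
  i < j < size s -> nth 0 s j \in drop i.+1 s.
Proof.
move=> /andP[ij js]; have -> : j = i.+1 + (j - i.+1) by lia.
rewrite -nth_drop mem_nth // size_drop.
exact: ltn_sub2r (leq_ltn_trans ij js) js.
Qed.

Lemma late_values_in_hand h s st1 st i (w : seq nat) :
  wf_state h s st1 -> reachable h s st1 st -> i < drawn st1 ->
  all (fun x => top st1 < x) w -> all (fun x => x \notin drop i.+1 s) w ->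
  {subset w <= [seq nth 0 s j | j <- played st]} ->
  {subset w <= [seq nth 0 s j | j <- hand st1]}.
Proof.
move=> Hwf Hreach Hi /allP Hbig /allP Hlate Hplayed x xw.
have /mapP[j jp xj] := Hplayed x xw.
have Hx := Hbig _ xw; rewrite xj in Hx.
case/orP: (played_above_top_available Hwf Hreach jp Hx) => [jh|jd].
  by rewrite xj map_f.
have js : j < size s.
  by rewrite ltnNge; apply/negP => /(nth_default 0) H; rewrite H in Hx.
by have := Hlate _ xw; rewrite xj mem_nth_drop // (leq_trans Hi jd).
Qed.

Theorem mainTheorem2 (n h : nat) (s : seq nat) (i : nat) (es : seq event) :
  all (fun a => 0 < a <= n) s ->
  i < size s ->
  useless n h s i ->
  winning n h s es ->
  ~ plays_card h s es i.
Proof.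
move=> _ _ [w [Hsize Hsorted Hwn Hlate]] [st [Hrun Hwin]] [st' [Hrun' Hi]].
move: Hrun'; rewrite Hrun => -[Est']; subst st'.
have [st1 [Hwf1 Htop1 Hdrawn1] Hreach] :=
  reachable_first_play (wf_init h s) (ex_intro _ es Hrun) (isT : i \notin [::]) Hi.
have Hbig : all (fun x => top st1 < x) w.
  by rewrite Htop1; apply: order_path_min ltn_trans Hsorted.
have Hwplayed : {subset w <= [seq nth 0 s j | j <- played st]}.
  move=> x xw.
  have [j jp <-] : exists2 j, j \in played st & nth 0 s j = x.
    by apply: Hwin; have := allP Hbig x xw; have := allP Hwn x xw; lia.
  exact: map_f.
have Hwhand := late_values_in_hand Hwf1 Hreach Hdrawn1 Hbig Hlate Hwplayed.
have Hwuniq : uniq w := sorted_uniq ltn_trans ltnn (path_sorted Hsorted).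
have := uniq_leq_size Hwuniq Hwhand.
rewrite size_map Hsize; case: Hwf1 => _ Hhand _.
by move=> Hw; have := leq_trans Hw Hhand; rewrite ltnn.
Qed.
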